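(* For every integer $n\ge0$, $$J\mathcal{G}_{n+2}^{(3)}-4J\mathcal{G}_{n}^{(3)}=-\frac{1}{7}\left[X_{n}(5\mathbf{A}+\mathbf{B})+X_{n+1}(\mathbf{A}-4\mathbf{B})\right]$$ and $$K\mathcal{G}_{n+2}^{(3)}-4K\mathcal{G}_{n}^{(3)}=-X_{n}(5\mathbf{C}+\mathbf{D})-X_{n+1}(\mathbf{C}-4\mathbf{D}),$$ where $\mathbf{A}=1+2\mathbf{e}_1-3\mathbf{e}_2+\mathbf{e}_3$, $\mathbf{B}=2-3\mathbf{e}_1+\mathbf{e}_2+2\mathbf{e}_3$, $\mathbf{C}=1-2\mathbf{e}_1+\mathbf{e}_2+\mathbf{e}_3$, $\mathbf{D}=-2+\mathbf{e}_1+\mathbf{e}_2-2\mathbf{e}_3$.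
   Context: Fix real numbers $\lambda_1,\lambda_2,\lambda_3$. The algebra $\mathbb{H}_{\lambda_1,\lambda_2,\lambda_3}$ of 3-parameter generalized quaternions is the real associative algebra of elements $\psi_0+\psi_1\mathbf{e}_1+\psi_2\mathbf{e}_2+\psi_3\mathbf{e}_3$ ($\psi_i\in\mathbb{R}$) with $\mathbf{e}_1^2=-\lambda_1\lambda_2$, $\mathbf{e}_2^2=-\lambda_1\lambda_3$, $\mathbf{e}_3^2=-\lambda_2\lambda_3$, $\mathbf{e}_1\mathbf{e}_2=-\mathbf{e}_2\mathbf{e}_1=\lambda_1\mathbf{e}_3$, $\mathbf{e}_1\mathbf{e}_3=-\mathbf{e}_3\mathbf{e}_1=-\lambda_2\mathbf{e}_2$, $\mathbf{e}_2\mathbf{e}_3=-\mathbf{e}_3\mathbf{e}_2=\lambda_3\mathbf{e}_1$. The third-order Jacobsthal numbers are $J_0^{(3)}=0$, $J_1^{(3)}=J_2^{(3)}=1$, $J_n^{(3)}=J_{n-1}^{(3)}+J_{n-2}^{(3)}+2J_{n-3}^{(3)}$ for $n\ge3$; the modified third-order Jacobsthal numbers are $K_0^{(3)}=3$, $K_1^{(3)}=1$, $K_2^{(3)}=3$, $K_n^{(3)}=K_{n-1}^{(3)}+K_{n-2}^{(3)}+2K_{n-3}^{(3)}$ for $n\ge3$. For $n\ge0$ define $J\mathcal{G}_n^{(3)}=J_n^{(3)}+J_{n+1}^{(3)}\mathbf{e}_1+J_{n+2}^{(3)}\mathbf{e}_2+J_{n+3}^{(3)}\mathbf{e}_3$ and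 $K\mathcal{G}_n^{(3)}=K_n^{(3)}+K_{n+1}^{(3)}\mathbf{e}_1+K_{n+2}^{(3)}\mathbf{e}_2+K_{n+3}^{(3)}\mathbf{e}_3$. The integer sequence $X_n$ is defined by $X_n=0,1,-1$ according as $n\equiv0,1,2\pmod 3$. *)

From mathcomp Require Import all_boot all_order all_algebra.
From mathcomp Require Import reals.
Set Implicit Arguments. Unset Strict Implicit. Unset Printing Implicit Defensive.
Import Order.TTheory GRing.Theory Num.Theory.
Local Open Scope ring_scope.

(*  The algebra H_{l1,l2,l3}: elements psi0 + psi1 e1 + psi2 e2 + psi3 e3.
   The parameters l1 l2 l3 index the type and determine the multiplication.  *)
Record GQ (R : realType) (l1 l2 l3 : R) := mkGQ { q0 : R; q1 : R; q2 : R; q3 : R }.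
Arguments mkGQ {R l1 l2 l3}.

Section Ops.
Variables (R : realType) (l1 l2 l3 : R).
Local Notation H := (GQ l1 l2 l3).

Definition gqadd (p q : H) : H :=
  mkGQ (q0 p + q0 q) (q1 p + q1 q) (q2 p + q2 q) (q3 p + q3 q).
Definition gqscale (c : R) (p : H) : H :=
  mkGQ (c  *  q0 p) (c  *  q1 p) (c  *  q2 p) (c  *  q3 p).
Definition gqsub (p q : H) : H := gqadd p (gqscale (-1) q).
Definition gqreal (a : R) : H := mkGQ a 0 0 0.
Definition e1 : H := mkGQ 0 1 0 0.
Definition e2 : H := mkGQ 0 0 1 0.
Definition e3 : H := mkGQ 0 0 0 1.
(*  multiplication determined by the table in the paper:
   e1^2=-l1 l2, e2^2=-l1 l3, e3^2=-l2 l3, e1e2=-e2e1=l1 e3,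
   e1e3=-e3e1=-l2 e2, e2e3=-e3e2=l3 e1  *)
Definition gqmul (p q : H) : H :=
  let a0 := q0 p in let a1 := q1 p in let a2 := q2 p in let a3 := q3 p in
  let b0 := q0 q in let b1 := q1 q in let b2 := q2 q in let b3 := q3 q in
  mkGQ (a0 * b0 - l1 * l2 * a1 * b1 - l1 * l3 * a2 * b2 - l2 * l3 * a3 * b3)%R
       (a0 * b1 + a1 * b0 + l3 * (a2 * b3 - a3 * b2))%R
       (a0 * b2 + a2 * b0 - l2 * (a1 * b3 - a3 * b1))%R
       (a0 * b3 + a3 * b0 + l1 * (a1 * b2 - a2 * b1))%R.

Definition gqA : H := gqadd (gqreal 1) (gqadd (gqscale 2 e1) (gqadd (gqscale (-3) e2) e3)).
Definition gqB : H := gqadd (gqreal 2) (gqadd (gqscale (-3) e1) (gqadd e2 (gqscale 2 e3))).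
Definition gqC : H := gqadd (gqreal 1) (gqadd (gqscale (-2) e1) (gqadd e2 e3)).
Definition gqD : H := gqadd (gqreal (-2)) (gqadd e1 (gqadd e2 (gqscale (-2) e3))).
End Ops.
Arguments e1 {R l1 l2 l3}. Arguments e2 {R l1 l2 l3}. Arguments e3 {R l1 l2 l3}.
Arguments gqA {R l1 l2 l3}. Arguments gqB {R l1 l2 l3}.
Arguments gqC {R l1 l2 l3}. Arguments gqD {R l1 l2 l3}.

Fixpoint Jac3 (n : nat) : int :=
  match n with
  | 0%N => 0 | 1%N => 1 | 2%N => 1
  | (S ((S ((S k) as k1)) as k2)) => Jac3 k2 + Jac3 k1 + 2  *  Jac3 k
  end.
Fixpoint Kac3 (n : nat) : int :=
  match n with
  | 0%N => 3 | 1%N => 1 | 2%N => 3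
  | (S ((S ((S k) as k1)) as k2)) => Kac3 k2 + Kac3 k1 + 2  *  Kac3 k
  end.

Definition Xseq (n : nat) : int :=
  match (n %% 3)%N with 0%N => 0 | 1%N => 1 | _ => -1 end.

Definition JG (R : realType) (l1 l2 l3 : R) (n : nat) : GQ l1 l2 l3 :=
  gqadd (gqreal _ _ _ (Jac3 n)%:~R) (gqadd (gqscale (Jac3 n.+1)%:~R e1)
    (gqadd (gqscale (Jac3 n.+2)%:~R e2) (gqscale (Jac3 n.+3)%:~R e3))).
Definition KG (R : realType) (l1 l2 l3 : R) (n : nat) : GQ l1 l2 l3 :=
  gqadd (gqreal _ _ _ (Kac3 n)%:~R) (gqadd (gqscale (Kac3 n.+1)%:~R e1)
    (gqadd (gqscale (Kac3 n.+2)%:~R e2) (gqscale (Kac3 n.+3)%:~R e3))).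

Lemma Jac3_test : [:: Jac3 3; Jac3 4; Jac3 5; Kac3 3; Kac3 4] = [:: 2%:Z; 5; 9; 10; 15].
Proof. reflexivity. Qed.

From mathcomp Require Import all_boot all_order all_algebra.
From mathcomp Require Import reals.
From mathcomp Require Import zify ring.
Import GRing.Theory Num.Theory.
Local Open Scope ring_scope.

(* The recurrence s(n+3) = s(n+2) + s(n+1) + 2 s(n) has characteristic polynomial
   x^3 - x^2 - x - 2 = (x - 2)(x^2 + x + 1).  Since x^2 - 4 is divisible by x - 2,
   the sequence d(n) = s(n+2) - 4 s(n) loses the 2^n mode and satisfies
   d(n+2) + d(n+1) + d(n) = 0.  Such sequences have period 3 and are exactly
   (d(0) + d(1)) X(n) + d(0) X(n+1).  The coordinates of JG(n+2) - 4 JG(n) are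
   d(n), ..., d(n+3); reducing X(n+2) and X(n+3) to X(n), X(n+1) and inserting
   (d(0), d(1)) = (1, -2) for J and (-9, 6) for K gives the coordinates of the
   right-hand sides. *)

Definition jacobsthal3_rec {R : comPzRingType} (s : nat -> R) : Prop :=
  forall n, s n.+3 = s n.+2 + s n.+1 + 2 * s n.

Lemma Jac3_rec : jacobsthal3_rec Jac3. Proof. by []. Qed.

Lemma Kac3_rec : jacobsthal3_rec Kac3. Proof. by []. Qed.

Lemma jacobsthal3_rec_intr (R : comPzRingType) {s : nat -> int} :
  jacobsthal3_rec s -> jacobsthal3_rec (fun n => (s n)%:~R : R).
Proof. by move=> rec n; rewrite rec !intrD intrM. Qed.

Lemma eq_period3 (T : Type) (f g : nat -> T) :
  (forall n, f n.+3 = f n) -> (forall n, g n.+3 = g n) ->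
  f 0%N = g 0%N -> f 1%N = g 1%N -> f 2%N = g 2%N -> f =1 g.
Proof.
move=> f3 g3 eq0 eq1 eq2; elim/ltn_ind => -[|[|[|n]]] IH //.
by rewrite f3 g3 IH //; lia.
Qed.

Lemma XseqS3 n : Xseq n.+3 = Xseq n.
Proof. by rewrite /Xseq -addn3 modnDr. Qed.

Lemma Xseq_sum3 n : Xseq n.+2 + Xseq n.+1 + Xseq n = 0.
Proof.
pose u k := Xseq k.+2 + Xseq k.+1 + Xseq k.
by apply: (@eq_period3 _ u (fun=> 0)) => // k; rewrite /u !XseqS3.
Qed.

Lemma XseqS2 n : Xseq n.+2 = - Xseq n - Xseq n.+1.
Proof. by have := Xseq_sum3 n; lia. Qed.

Section Sum3.
Variables (R : comPzRingType) (u : nat -> R).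
Hypothesis u_sum3 : forall n, u n.+2 + u n.+1 + u n = 0.

Lemma sum3_period3 n : u n.+3 = u n.
Proof.
apply/eqP; rewrite -subr_eq0.
have -> : u n.+3 - u n = (u n.+3 + u n.+2 + u n.+1) - (u n.+2 + u n.+1 + u n) by ring.
by rewrite u_sum3 u_sum3 subrr.
Qed.

Lemma sum3_XseqE n :
  u n = (u 0%N + u 1%N) * (Xseq n)%:~R + u 0%N * (Xseq n.+1)%:~R.
Proof.
pose v k := (u 0%N + u 1%N) * (Xseq k)%:~R + u 0%N * (Xseq k.+1)%:~R.
apply: (@eq_period3 _ u v) => [k|k|||]; rewrite /v ?sum3_period3 ?XseqS3 //.
- by rewrite /Xseq /=; ring.
- by rewrite /Xseq /=; ring.
- by rewrite /Xseq /= -[u 2%N]subr0 -(u_sum3 0); ring.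
Qed.

End Sum3.

Definition jacobsthal3_diff {R : comPzRingType} (s : nat -> R) n := s n.+2 - 4 * s n.

Section Jacobsthal3.
Context {R : comPzRingType} {s : nat -> R}.
Hypothesis s_rec : jacobsthal3_rec s.
Local Notation d := (jacobsthal3_diff s).

Lemma jacobsthal3_diff_sum3 n : d n.+2 + d n.+1 + d n = 0.
Proof. by rewrite /jacobsthal3_diff !s_rec; ring. Qed.

Lemma jacobsthal3_diffE n :
  d n = (d 0%N + d 1%N) * (Xseq n)%:~R + d 0%N * (Xseq n.+1)%:~R.
Proof. exact: sum3_XseqE jacobsthal3_diff_sum3 n. Qed.

End Jacobsthal3.

Lemma jacobsthal3_diff_intr (R : comPzRingType) (s : nat -> int) n :
  jacobsthal3_diff (fun k => (s k)%:~R : R) n = (jacobsthal3_diff s n)%:~R.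
Proof. by rewrite /jacobsthal3_diff intrB intrM. Qed.

Lemma Jac3_diff01 : jacobsthal3_diff Jac3 0 = 1 /\ jacobsthal3_diff Jac3 1 = -2.
Proof. by []. Qed.

Lemma Kac3_diff01 : jacobsthal3_diff Kac3 0 = -9 /\ jacobsthal3_diff Kac3 1 = 6.
Proof. by []. Qed.

Section GQseq.
Variables (R : realType) (l1 l2 l3 : R).
Local Notation d := jacobsthal3_diff.

Lemma gqaddE (a0 a1 a2 a3 b0 b1 b2 b3 : R) :
  gqadd (mkGQ a0 a1 a2 a3) (mkGQ b0 b1 b2 b3)
  = mkGQ (a0 + b0) (a1 + b1) (a2 + b2) (a3 + b3) :> GQ l1 l2 l3.
Proof. by []. Qed.

Lemma gqscaleE (c a0 a1 a2 a3 : R) :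
  gqscale c (mkGQ a0 a1 a2 a3) = mkGQ (c * a0) (c * a1) (c * a2) (c * a3) :> GQ l1 l2 l3.
Proof. by []. Qed.

Lemma gq_coordsE a0 a1 a2 a3 :
  gqadd (gqreal l1 l2 l3 a0) (gqadd (gqscale a1 e1) (gqadd (gqscale a2 e2) (gqscale a3 e3)))
  = mkGQ a0 a1 a2 a3.
Proof. by rewrite /gqreal /e1 /e2 /e3 !(gqscaleE, gqaddE); congr mkGQ; ring. Qed.

Lemma gqA_coords : gqA = mkGQ 1 2 (-3) 1 :> GQ l1 l2 l3.
Proof. by rewrite /gqA /gqreal /e1 /e2 /e3 !(gqscaleE, gqaddE); congr mkGQ; ring. Qed.

Lemma gqB_coords : gqB = mkGQ 2 (-3) 1 2 :> GQ l1 l2 l3.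
Proof. by rewrite /gqB /gqreal /e1 /e2 /e3 !(gqscaleE, gqaddE); congr mkGQ; ring. Qed.

Lemma gqC_coords : gqC = mkGQ 1 (-2) 1 1 :> GQ l1 l2 l3.
Proof. by rewrite /gqC /gqreal /e1 /e2 /e3 !(gqscaleE, gqaddE); congr mkGQ; ring. Qed.

Lemma gqD_coords : gqD = mkGQ (-2) 1 1 (-2) :> GQ l1 l2 l3.
Proof. by rewrite /gqD /gqreal /e1 /e2 /e3 !(gqscaleE, gqaddE); congr mkGQ; ring. Qed.

Definition gqseq (s : nat -> R) n : GQ l1 l2 l3 := mkGQ (s n) (s n.+1) (s n.+2) (s n.+3).

Lemma JG_gqseq n : JG l1 l2 l3 n = gqseq (fun k => (Jac3 k)%:~R) n.
Proof. exact: gq_coordsE. Qed.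

Lemma KG_gqseq n : KG l1 l2 l3 n = gqseq (fun k => (Kac3 k)%:~R) n.
Proof. exact: gq_coordsE. Qed.

Lemma gqseq_subZ (s : nat -> R) c n :
  gqsub (gqseq s n.+2) (gqscale c (gqseq s n)) = gqseq (fun k => s k.+2 - c * s k) n.
Proof. by rewrite /gqsub /gqseq !(gqscaleE, gqaddE); congr mkGQ; ring. Qed.

Lemma gqseq_jacobsthal3_diffE (s : nat -> R) (s_rec : jacobsthal3_rec s) n :
  gqsub (gqseq s n.+2) (gqscale 4 (gqseq s n)) =
    gqadd (gqscale (Xseq n)%:~R
             (mkGQ (d s 0%N + d s 1%N) (- d s 0%N) (- d s 1%N) (d s 0%N + d s 1%N)))
          (gqscale (Xseq n.+1)%:~R
             (mkGQ (d s 0%N) (d s 1%N) (- d s 0%N - d s 1%N) (d s 0%N))).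
Proof.
rewrite gqseq_subZ -/(d s) /gqseq.
rewrite !(jacobsthal3_diffE s_rec n, jacobsthal3_diffE s_rec n.+1,
          jacobsthal3_diffE s_rec n.+2, jacobsthal3_diffE s_rec n.+3).
rewrite !XseqS3 XseqS2 !(gqscaleE, gqaddE).
by congr mkGQ; ring.
Qed.

End GQseq.

Arguments gqseq_jacobsthal3_diffE {R l1 l2 l3 s}.

Theorem theorem4p3 (R : realType) (l1 l2 l3 : R) (n : nat) :
  gqsub (JG l1 l2 l3 n.+2) (gqscale 4 (JG l1 l2 l3 n)) =
    gqscale (- (1 / 7))
      (gqadd (gqscale (Xseq n)%:~R (gqadd (gqscale 5 gqA) gqB))
             (gqscale (Xseq n.+1)%:~R (gqadd gqA (gqscale (-4) gqB))))
  /\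
  gqsub (KG l1 l2 l3 n.+2) (gqscale 4 (KG l1 l2 l3 n)) =
    gqsub (gqscale (- (Xseq n)%:~R) (gqadd (gqscale 5 gqC) gqD))
          (gqscale (Xseq n.+1)%:~R (gqadd gqC (gqscale (-4) gqD))).
Proof.
rewrite !JG_gqseq !KG_gqseq.
rewrite !(gqseq_jacobsthal3_diffE (jacobsthal3_rec_intr R Jac3_rec)).
rewrite !(gqseq_jacobsthal3_diffE (jacobsthal3_rec_intr R Kac3_rec)).
rewrite !jacobsthal3_diff_intr.
case: Jac3_diff01 => -> ->; case: Kac3_diff01 => -> ->.
rewrite gqA_coords gqB_coords gqC_coords gqD_coords /gqsub !(gqscaleE, gqaddE).
by split; congr mkGQ; field.
Qed.
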